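(* Fix $\nu>0$. In the setting of the context (one equality constraint, no inequality constraints), let $(\bar\mu,\bar\tau,\bar\sigma_f,\bar\sigma_h)$ be a critical point of the augmented canonical dual function $P^d_\nu$ in the interior of its domain. Then $\bar\tau=0$, $(\bar\mu,\bar\sigma_f,\bar\sigma_h)$ is a critical point of $P^d$, and $$P^d_\nu(\bar\mu,0,\bar\sigma_f,\bar\sigma_h)=P^d(\bar\mu,\bar\sigma_f,\bar\sigma_h).$$
   Context: Problem: minimize $f(x)$ over $x\in\mathbb{R}^n$ subject to a single equality constraint $h(x)=0$, where $f(x)=V_f(\Lambda_f(x))+\tfrac12x^TAx-c^Tx$ ($A$ symmetric, $c\in\mathbb{R}^n$) and $h(x)=V_h(\Lambda_h(x))\in\mathbb{R}$. Here $\Lambda_f:\mathbb{R}^n\to\mathbb{R}^{k_f}$, $\Lambda_h:\mathbb{R}^n\to\mathbb{R}^{l}$ are quadratic maps (components polynomials of degree at most 2), and $V_f,V_h$ are ''canonical functions'': each $V$ is differentiable on an open set $E$ containing the image of its $\Lambda$, $\nabla V:E\to E^*$ is a bijection onto an open set $E^*$, and the Legendre conjugate $V^*(\sigma)=\sigma^T\xi-V(\xi)$, $\xi=(\nabla V)^{-1}(\sigma)$, is differentiable on $E^*$ with $\nabla V^*=(\nabla V)^{-1}$. Augmented Lagrangian: $\mathcal L_\nu(x,\mu)=f(x)+\mu h(x)+\frac{1}{2\nu}h(x)^2$. Its total complementarity function, for $\mu,\tau\in\mathbb{R}$, $\sigma_f\in E_f^*$, $\sigma_h\in E_h^*$: $$\Xi_1^\nu(x,\mu,\tau,\sigma_f,\sigma_h)=\Lambda_f(x)^T\sigma_f-V_f^*(\sigma_f)+(\mu+\tau)\big[\Lambda_h(x)^T\sigma_h-V_h^*(\sigma_h)\big]-\tfrac{\nu}{2}\tau^2+\tfrac12x^TAx-c^Tx.$$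 This is quadratic in $x$; $P^d_\nu(\mu,\tau,\sigma_f,\sigma_h)$ is defined, on the open set where the $x$-Hessian $\nabla_x^2\Xi_1^\nu$ is nonsingular, as the value of $\Xi_1^\nu(\cdot,\mu,\tau,\sigma_f,\sigma_h)$ at its unique stationary point in $x$. Similarly, with $\Xi_1(x,\mu,\sigma_f,\sigma_h)=\Lambda_f(x)^T\sigma_f-V_f^*(\sigma_f)+\mu[\Lambda_h(x)^T\sigma_h-V_h^*(\sigma_h)]+\tfrac12x^TAx-c^Tx$, the (non-augmented) canonical dual function $P^d(\mu,\sigma_f,\sigma_h)$ is defined, where $\nabla_x^2\Xi_1$ is nonsingular, as the value of $\Xi_1(\cdot,\mu,\sigma_f,\sigma_h)$ at its unique stationary point in $x$. *)

From Stdlib Require Import Reals ClassicalEpsilon.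
From mathcomp Require Import ssreflect ssrfun ssrbool eqtype ssrnat seq fintype bigop.
Set Implicit Arguments.
Unset Strict Implicit.
Open Scope R_scope.

Definition vec (n : nat) := 'I_n -> R.
Definition vsum (n : nat) (f : 'I_n -> R) : R := \big[Rplus/0]_(i < n) f i.
Definition dot (n : nat) (u v : vec n) : R := vsum (fun i => u i * v i).
Definition vsub (n : nat) (u v : vec n) : vec n := fun i => u i - v i.
Definition vnorm (n : nat) (v : vec n) : R := sqrt (dot v v).

Definition open_set (n : nat) (E : vec n -> Prop) : Prop :=
  forall x, E x -> exists r, 0 < r /\ forall y, vnorm (vsub y x) < r -> E y.

Definition has_gradient (n : nat) (f : vec n -> R) (x g : vec n) : Prop :=
  forall eps, 0 < eps -> exists d, 0 < d /\
    forall y, vnorm (vsub y x) < d ->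
      Rabs (f y - f x - dot g (vsub y x)) <= eps * vnorm (vsub y x).

(* Legendre conjugate V^*(s) = s^T xi - V(xi), xi = (grad V)^{-1}(s) *)
Definition conj_fun (n : nat) (V : vec n -> R) (ginv : vec n -> vec n) (s : vec n) : R :=
  dot s (ginv s) - V (ginv s).

Definition is_canonical (n : nat) (V : vec n -> R) (E Es : vec n -> Prop)
    (gradV ginv : vec n -> vec n) : Prop :=
  open_set E /\ open_set Es /\
  (forall xi, E xi -> has_gradient V xi (gradV xi)) /\
  (forall xi, E xi -> Es (gradV xi)) /\
  (forall s, Es s -> E (ginv s) /\ gradV (ginv s) = s) /\
  (forall xi, E xi -> ginv (gradV xi) = xi) /\
  (forall s, Es s -> has_gradient (conj_fun V ginv) s (ginv s)).

Definition quad_map (n k : nat) (Q : 'I_k -> 'I_n -> 'I_n -> R) (b : 'I_k -> 'I_n -> R)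
    (c0 : 'I_k -> R) (x : vec n) : vec k :=
  fun i => vsum (fun j => vsum (fun m => Q i j m * x j * x m))
           + vsum (fun j => b i j * x j) + c0 i.

Record problem (n kf l : nat) := Problem {
  Qf : 'I_kf -> 'I_n -> 'I_n -> R; bf : 'I_kf -> 'I_n -> R; cf0 : 'I_kf -> R;
  Qh : 'I_l -> 'I_n -> 'I_n -> R;  bh : 'I_l -> 'I_n -> R;  ch0 : 'I_l -> R;
  Amat : 'I_n -> 'I_n -> R; cvec : vec n;
  Vf : vec kf -> R; gradVf : vec kf -> vec kf; invgradVf : vec kf -> vec kf;
  Ef : vec kf -> Prop; Efs : vec kf -> Prop;
  Vh : vec l -> R; gradVh : vec l -> vec l; invgradVh : vec l -> vec l;
  Eh : vec l -> Prop; Ehs : vec l -> Prop }.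


Definition Lf n kf l (P : problem n kf l) (x : vec n) : vec kf := quad_map (Qf P) (bf P) (cf0 P) x.
Definition Lh n kf l (P : problem n kf l) (x : vec n) : vec l := quad_map (Qh P) (bh P) (ch0 P) x.
Definition Vfstar n kf l (P : problem n kf l) (s : vec kf) : R := conj_fun (Vf P) (invgradVf P) s.
Definition Vhstar n kf l (P : problem n kf l) (s : vec l) : R := conj_fun (Vh P) (invgradVh P) s.

Definition quadpart n kf l (P : problem n kf l) (x : vec n) : R :=
  1/2 * dot x (fun j => vsum (fun m => Amat P j m * x m)) - dot (cvec P) x.

Definition f_obj n kf l (P : problem n kf l) (x : vec n) : R := Vf P (Lf P x) + quadpart P x.
Definition h_con n kf l (P : problem n kf l) (x : vec n) : R := Vh P (Lh P x).

Definition Xi1nu n kf l (P : problem n kf l) (nu : R) (x : vec n) (mu tau : R)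
    (sf : vec kf) (sh : vec l) : R :=
  dot (Lf P x) sf - Vfstar P sf + (mu + tau) * (dot (Lh P x) sh - Vhstar P sh)
  - nu / 2 * tau ^ 2 + quadpart P x.

Definition Xi1 n kf l (P : problem n kf l) (x : vec n) (mu : R)
    (sf : vec kf) (sh : vec l) : R :=
  dot (Lf P x) sf - Vfstar P sf + mu * (dot (Lh P x) sh - Vhstar P sh) + quadpart P x.

(* x-Hessian of Xi1nu (with s = mu + tau) and of Xi1 (with s = mu) *)
Definition hess n kf l (P : problem n kf l) (s : R) (sf : vec kf) (sh : vec l)
    : 'I_n -> 'I_n -> R :=
  fun j m => vsum (fun i => sf i * (Qf P i j m + Qf P i m j))
           + s * vsum (fun i => sh i * (Qh P i j m + Qh P i m j)) + Amat P j m.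

Definition nonsingular (n : nat) (M : 'I_n -> 'I_n -> R) : Prop :=
  forall v : vec n, (forall j, vsum (fun m => M j m * v m) = 0) -> forall j, v j = 0.

Definition stationary (n : nat) (g : vec n -> R) (x : vec n) : Prop :=
  has_gradient g x (fun _ => 0).
Definition argstat (n : nat) (g : vec n -> R) : vec n :=
  epsilon (inhabits (fun _ => 0)) (stationary g).

(* canonical dual functions (meaningful on their domains, where the stationary
   point is unique) *)
Definition Pdnu n kf l (P : problem n kf l) (nu mu tau : R) (sf : vec kf) (sh : vec l) : R :=
  Xi1nu P nu (argstat (fun x => Xi1nu P nu x mu tau sf sh)) mu tau sf sh.
Definition Pd n kf l (P : problem n kf l) (mu : R) (sf : vec kf) (sh : vec l) : R :=
  Xi1 P (argstat (fun x => Xi1 P x mu sf sh)) mu sf sh.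

Definition dom_Pdnu n kf l (P : problem n kf l) (mu tau : R) (sf : vec kf) (sh : vec l) : Prop :=
  Efs P sf /\ Ehs P sh /\ nonsingular (hess P (mu + tau) sf sh).
Definition dom_Pd n kf l (P : problem n kf l) (mu : R) (sf : vec kf) (sh : vec l) : Prop :=
  Efs P sf /\ Ehs P sh /\ nonsingular (hess P mu sf sh).

Definition dist4 kf l (mu tau : R) (sf : vec kf) (sh : vec l)
    (mu' tau' : R) (sf' : vec kf) (sh' : vec l) : R :=
  sqrt ((mu' - mu) ^ 2 + (tau' - tau) ^ 2
        + dot (vsub sf' sf) (vsub sf' sf) + dot (vsub sh' sh) (vsub sh' sh)).
Definition dist3 kf l (mu : R) (sf : vec kf) (sh : vec l)
    (mu' : R) (sf' : vec kf) (sh' : vec l) : R :=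
  sqrt ((mu' - mu) ^ 2 + dot (vsub sf' sf) (vsub sf' sf) + dot (vsub sh' sh) (vsub sh' sh)).

Definition interior4 kf l (D : R -> R -> vec kf -> vec l -> Prop) mu tau sf sh : Prop :=
  exists r, 0 < r /\ forall mu' tau' sf' sh',
    dist4 mu tau sf sh mu' tau' sf' sh' < r -> D mu' tau' sf' sh'.

Definition zero_grad4 kf l (F : R -> R -> vec kf -> vec l -> R) mu tau sf sh : Prop :=
  forall eps, 0 < eps -> exists d, 0 < d /\ forall mu' tau' sf' sh',
    dist4 mu tau sf sh mu' tau' sf' sh' < d ->
    Rabs (F mu' tau' sf' sh' - F mu tau sf sh) <= eps * dist4 mu tau sf sh mu' tau' sf' sh'.
Definition zero_grad3 kf l (F : R -> vec kf -> vec l -> R) mu sf sh : Prop :=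
  forall eps, 0 < eps -> exists d, 0 < d /\ forall mu' sf' sh',
    dist3 mu sf sh mu' sf' sh' < d ->
    Rabs (F mu' sf' sh' - F mu sf sh) <= eps * dist3 mu sf sh mu' sf' sh'.

Definition critical_Pdnu n kf l (P : problem n kf l) nu mu tau sf sh : Prop :=
  dom_Pdnu P mu tau sf sh /\ zero_grad4 (Pdnu P nu) mu tau sf sh.
Definition critical_Pd n kf l (P : problem n kf l) mu sf sh : Prop :=
  dom_Pd P mu sf sh /\ zero_grad3 (Pd P) mu sf sh.

Definition setting n kf l (P : problem n kf l) : Prop :=
  (forall j m, Amat P j m = Amat P m j) /\
  is_canonical (Vf P) (Ef P) (Efs P) (gradVf P) (invgradVf P) /\
  is_canonical (Vh P) (Eh P) (Ehs P) (gradVh P) (invgradVh P) /\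
  (forall x, Ef P (Lf P x)) /\ (forall x, Eh P (Lh P x)).

(* The total complementarity function of the augmented Lagrangian
   only sees mu and tau through mu + tau, apart from the term -nu/2 tau^2:
       Xi1nu(x, mu, tau, sf, sh) = Xi1(x, mu + tau, sf, sh) - nu/2 tau^2.
   A constant shift does not change the stationary points in x, hence
       Pdnu(mu, tau, sf, sh) = Pd(mu + tau, sf, sh) - nu/2 tau^2.       (Pdnu_Pd)
   Along the anti-diagonal direction (mu - t, tau + t) the first term is frozen,
   so Pdnu moves by the quadratic -nu tau t - nu/2 t^2; a vanishing derivative
   forces its linear coefficient -nu tau to vanish, i.e. tau = 0.  On the slice
   tau = 0 the two dual functions agree and the distances dist4 and dist3
   coincide, so criticality of Pdnu restricts to criticality of Pd. *)
From Stdlib Require Import Reals Lra.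
From Stdlib Require Import FunctionalExtensionality PropExtensionality.
From mathcomp Require Import ssreflect ssrfun ssrbool eqtype ssrnat seq fintype bigop.
Open Scope R_scope.

Lemma stationary_shift (n : nat) (g : vec n -> R) (c : R) :
  stationary (fun x => g x + c) = stationary g.
Proof.
apply: functional_extensionality => x; apply: propositional_extensionality.
have Ediff : forall y, g y + c - (g x + c) = g y - g x by move=> y; ring.
rewrite /stationary /has_gradient.
split=> Hg eps Heps; case: (Hg eps Heps) => d [Hd Hy]; exists d; split=> // y Hyx.
- by have := Hy y Hyx; rewrite Ediff.
- by rewrite Ediff; apply: Hy.
Qed.

Lemma Pdnu_Pd n kf l (P : problem n kf l) nu mu tau sf sh :
  Pdnu P nu mu tau sf sh = Pd P (mu + tau) sf sh - nu / 2 * tau ^ 2.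
Proof.
have EXi : (fun x => Xi1nu P nu x mu tau sf sh)
         = (fun x => Xi1 P x (mu + tau) sf sh + - (nu / 2 * tau ^ 2)).
  by apply: functional_extensionality => x; rewrite /Xi1nu /Xi1; ring.
by rewrite /Pdnu /Pd EXi /argstat stationary_shift /Xi1nu /Xi1; ring.
Qed.

(* A quadratic a t + b t^2 which is o(t) as t -> 0+ has a = 0: otherwise, for
   t small enough that |b| t <= |a|/4, it exceeds |a| t / 2 in absolute value. *)
Lemma flat_quadratic (b a : R) :
  (forall eps, 0 < eps -> exists d, 0 < d /\
     forall t, 0 < t < d -> Rabs (a * t + b * t ^ 2) <= eps * t) ->
  a = 0.
Proof.
move=> Hflat; case: (Req_dec a 0) => // Ha.
have Ha_pos : 0 < Rabs a by apply: Rabs_pos_lt.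
have Hb_pos : 0 < Rabs b + 1 by move: (Rabs_pos b); lra.
case: (Hflat (Rabs a / 2)) => [|d [Hd Hsmall]]; first lra.
set t := Rmin (d / 2) (Rabs a / (4 * (Rabs b + 1))).
have Ht_pos : 0 < t by apply: Rmin_pos; [lra | apply: Rdiv_lt_0_compat; lra].
have Ht_d : t < d by move: (Rmin_l (d / 2) (Rabs a / (4 * (Rabs b + 1)))); rewrite -/t; lra.
have Hbt : Rabs b * t <= Rabs a / 4.
  have Ht_le : t * (4 * (Rabs b + 1)) <= Rabs a.
    have := Rmin_r (d / 2) (Rabs a / (4 * (Rabs b + 1))); rewrite -/t => Ht.
    have := Rmult_le_compat_r (4 * (Rabs b + 1)) _ _ ltac:(lra) Ht.
    by rewrite /Rdiv Rmult_assoc Rinv_l ?Rmult_1_r //; lra.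
  move: (Rabs_pos b); nra.
have Hlower : Rabs a * t - Rabs b * t ^ 2 <= Rabs (a * t + b * t ^ 2).
  have Hat : Rabs (a * t) = Rabs a * t by rewrite Rabs_mult (Rabs_pos_eq t); lra.
  have Hbt2 : Rabs (b * t ^ 2) = Rabs b * t ^ 2.
    by rewrite Rabs_mult (Rabs_pos_eq (t ^ 2)) //; apply: pow_le; lra.
  have := Rabs_triang_inv (a * t) (- (b * t ^ 2)).
  by rewrite Rabs_Ropp Hat Hbt2 /Rminus Ropp_involutive.
have := Hsmall t (conj Ht_pos Ht_d); nra.
Qed.

Lemma dist4_antidiagonal {kf l} mu tau (sf : vec kf) (sh : vec l) {t} :
  0 <= t -> dist4 mu tau sf sh (mu - t) (tau + t) sf sh <= 2 * t.
Proof.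
move=> Ht.
have dot_vsub_self : forall k (v : vec k), dot (vsub v v) (vsub v v) = 0.
  move=> k v; rewrite /dot /vsum; apply: (big_ind (fun x => x = 0)) => //.
  - by move=> x y -> ->; ring.
  - by move=> i _; rewrite /vsub; ring.
rewrite /dist4 !dot_vsub_self -(sqrt_square (2 * t)); last lra.
apply: sqrt_le_1_alt; nra.
Qed.

Lemma zero_grad4_antidiagonal {kf l} {F : R -> R -> vec kf -> vec l -> R} {mu tau sf sh} :
  zero_grad4 F mu tau sf sh ->
  forall eps, 0 < eps -> exists d, 0 < d /\ forall t, 0 < t < d ->
    Rabs (F (mu - t) (tau + t) sf sh - F mu tau sf sh) <= eps * t.
Proof.
move=> Hz eps Heps.
case: (Hz (eps / 2)) => [|d [Hd Hbound]]; first lra.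
exists (d / 2); split=> [|t [Ht Htd]]; first lra.
have Hdist := dist4_antidiagonal mu tau sf sh (Rlt_le _ _ Ht).
apply: Rle_trans (Hbound (mu - t) (tau + t) sf sh ltac:(lra)) _.
have := Rmult_le_compat_l (eps / 2) _ _ ltac:(lra) Hdist; lra.
Qed.

Lemma zero_grad4_slice {kf l} {F : R -> R -> vec kf -> vec l -> R} {mu sf sh} :
  zero_grad4 F mu 0 sf sh -> zero_grad3 (fun m s1 s2 => F m 0 s1 s2) mu sf sh.
Proof.
move=> Hz eps Heps; case: (Hz eps Heps) => d [Hd Hbound].
exists d; split=> // mu' sf' sh'.
have Edist : dist4 mu 0 sf sh mu' 0 sf' sh' = dist3 mu sf sh mu' sf' sh'.
  by rewrite /dist4 /dist3; f_equal; ring.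
by rewrite -Edist; apply: Hbound.
Qed.

Theorem theorem3 (n kf l : nat) (P : problem n kf l) (nu : R) (Hnu : 0 < nu)
  (HP : setting P)
  (mu tau : R) (sf : vec kf) (sh : vec l)
  (Hint : interior4 (dom_Pdnu P) mu tau sf sh)
  (Hcrit : critical_Pdnu P nu mu tau sf sh) :
  tau = 0 /\ critical_Pd P mu sf sh /\ Pdnu P nu mu 0 sf sh = Pd P mu sf sh.
Proof.
case: Hcrit => [[Hsf [Hsh Hhess]] Hz].
have Htau : tau = 0.
  suff : - nu * tau = 0 by move=> H; nra.
  apply: (flat_quadratic (- nu / 2)) => eps Heps.
  case: (zero_grad4_antidiagonal Hz eps Heps) => d [Hd Hsmall].
  exists d; split=> // t Ht; apply: Rle_trans _ (Hsmall t Ht); right; f_equal.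
  by rewrite !Pdnu_Pd (_ : mu - t + (tau + t) = mu + tau); [field | ring].
subst tau.
have EPd : (fun m s1 s2 => Pdnu P nu m 0 s1 s2) = Pd P.
  do 3!apply: functional_extensionality => ?.
  by rewrite Pdnu_Pd Rplus_0_r; ring.
split=> //; split; last by rewrite -EPd.
split; first by rewrite /dom_Pd -(Rplus_0_r mu).
by rewrite -EPd; apply: zero_grad4_slice.
Qed.
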